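(* Let $g:\mathbb{R}\to\mathbb{R}$ be continuously differentiable, even and $\pi$-periodic. Let $n\ge 1$ and define $G(\vec{\mu})=\frac{1}{\pi}\int_{-\pi/2}^{\pi/2}\prod_{i=0}^{n-1} g(x+\mu_i)\,dx$ for $\vec\mu=(\mu_0,\dots,\mu_{n-1})\in\mathbb{R}^n$. Let $m$ be a positive integer and $\mu_0^*\in\mathbb{R}$ arbitrary, and let $\vec{\mu}^*$ be the point with $\mu^*_i=\mu^*_0+i\,m\pi/n$ for $i=0,\dots,n-1$ (the ''search strategy $(m,n)$'': consecutive observation angles separated by the constant $m\pi/n$). Then $\vec\mu^*$ is a stationary point of $G$: $\frac{\partial G}{\partial\mu_i}(\vec{\mu}^* )=0$ for all $i\in\{0,\dots,n-1\}$.
   Context: $g(x)$ is the probability of not detecting a target observed at angle $x$; $G$ is the average multi-observation probability of no detection over a uniformly distributed target orientation. *)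

From Stdlib Require Import Reals.
From Coquelicot Require Import Coquelicot.
Open Scope R_scope.

Fixpoint prodR (n : nat) (f : nat -> R) : R :=
  match n with
  | O => 1
  | S k => prodR k f * f k
  end.

(* G(mu) = (1/pi) * \int_{-pi/2}^{pi/2} prod_{i<n} g(x + mu_i) dx,
   where mu : nat -> R, only the indices 0..n-1 matter. *)
Definition Gfun (g : R -> R) (n : nat) (mu : nat -> R) : R :=
  / PI * RInt (fun x => prodR n (fun i => g (x + mu i))) (- (PI / 2)) (PI / 2).

Definition upd (mu : nat -> R) (i : nat) (t : R) : nat -> R :=
  fun j => if Nat.eqb j i then t else mu j.

From Stdlib Require Import Reals Lia Lra.
From Coquelicot Require Import Coquelicot.
Open Scope R_scope.

(* Since consecutive angles differ by m pi / n, the angles taken mod pi form a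
   cyclic arithmetic progression.  Rotating the product so that the moved factor
   comes first, dG/dmu_i is (1/pi) times the integral over a period of
   k(x) = g'(x + mu_i) Q(x), where Q is the product of the other factors.  The
   reflection x |-> -x - 2 mu_i reverses the progression, so it fixes Q (g is
   even) while negating g'(x + mu_i) (g' is odd); hence k is antisymmetric about
   -mu_i, and a periodic antisymmetric function integrates to 0 over a period. *)

Lemma prodR_ext n f f' :
  (forall j, (j < n)%nat -> f j = f' j) -> prodR n f = prodR n f'.
Proof.
  induction n as [|n IH]; simpl; intros H; auto.
  rewrite IH by (intros; apply H; lia). rewrite H by lia. reflexivity.
Qed.

Lemma prodR_Sl n f : prodR (S n) f = f O * prodR n (fun k => f (S k)).
Proof.
  induction n as [|n IH].
  - simpl. ring.
  - change (prodR (S (S n)) f) with (prodR (S n) f * f (S n)).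
    rewrite IH. simpl. ring.
Qed.

Lemma prodR_rotate n b s :
  (forall j, b (j + n)%nat = b j) -> prodR n (fun k => b (s + k)%nat) = prodR n b.
Proof.
  intros Hb.
  assert (rotate1 : forall f, f n = f O -> prodR n (fun k => f (S k)) = prodR n f).
  { destruct n as [|n]; intros f Hf; [reflexivity|].
    rewrite (prodR_Sl n f). simpl. rewrite Hf. ring. }
  induction s as [|s IH]; [reflexivity|].
  rewrite <- IH, <- (rotate1 (fun k => b (s + k)%nat)).
  - apply prodR_ext; intros; f_equal; lia.
  - rewrite Nat.add_0_r. apply Hb.
Qed.

Lemma prodR_rev n c : prodR n (fun k => c (n - 1 - k)%nat) = prodR n c.
Proof.
  induction n as [|n IH]; [reflexivity|].
  rewrite prodR_Sl. replace (S n - 1 - 0)%nat with n by lia.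
  rewrite (prodR_ext n _ (fun k => c (n - 1 - k)%nat)) by (intros; f_equal; lia).
  rewrite IH. simpl. ring.
Qed.

Lemma continuous_prodR n (h : nat -> R -> R) x :
  (forall k, continuous (h k) x) -> continuous (fun y => prodR n (fun k => h k y)) x.
Proof.
  intros H. induction n as [|n IH]; simpl.
  - apply continuous_const.
  - apply (continuous_mult (fun y => prodR n (fun k => h k y)) (h n)); auto.
Qed.

(* The factor y sits at index i; rotating by i brings it to the front. *)
Lemma prodR_upd_periodic n i y c :
  (i < n)%nat -> (forall j, c (j + n)%nat = c j) ->
  prodR n (fun j => if Nat.eqb j i then y else c j)
  = y * prodR (n - 1) (fun k => c (i + 1 + k)%nat).
Proof.
  intros Hi Hc.
  set (b := fun j => if Nat.eqb (j mod n) i then y else c j).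
  assert (Hb : forall j, b (j + n)%nat = b j).
  { intros j. unfold b. replace (j + n)%nat with (j + 1 * n)%nat by lia.
    rewrite Nat.Div0.mod_add. replace (j + 1 * n)%nat with (j + n)%nat by lia.
    rewrite Hc. reflexivity. }
  transitivity (prodR n b).
  { apply prodR_ext. intros j Hj. unfold b. rewrite Nat.mod_small by lia. reflexivity. }
  rewrite <- (prodR_rotate n b i Hb).
  replace (prodR n (fun k => b (i + k)%nat))
    with (prodR (S (n - 1)) (fun k => b (i + k)%nat)) by (f_equal; lia).
  rewrite prodR_Sl. unfold b at 1.
  rewrite Nat.add_0_r, Nat.mod_small, Nat.eqb_refl by lia. f_equal.
  apply prodR_ext. intros k Hk. unfold b.
  assert (Hne : ((i + S k) mod n)%nat <> i).
  { intros E. assert (D := Nat.div_mod_eq (i + S k) n).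
    rewrite E in D. destruct ((i + S k) / n)%nat; nia. }
  apply Nat.eqb_neq in Hne. rewrite Hne. f_equal. lia.
Qed.

Lemma ex_RInt_continuous_R (f : R -> R) a b :
  (forall x, continuous f x) -> ex_RInt f a b.
Proof. intros H. apply (@ex_RInt_continuous R_CompleteNormedModule). auto. Qed.

Lemma RInt_periodic_shift (h : R -> R) T c :
  (forall x, continuous h x) -> (forall x, h (x + T) = h x) ->
  RInt h c (c + T) = RInt h 0 T.
Proof.
  intros Hc Hp.
  assert (Ex : forall a b, ex_RInt h a b) by (intros; apply ex_RInt_continuous_R; auto).
  rewrite <- (RInt_Chasles h c 0 (c + T)), <- (RInt_Chasles h 0 T (c + T)) by auto.
  assert (Hs := RInt_comp_lin h 1 T 0 c).
  replace (1 * 0 + T) with T in Hs by ring.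
  replace (1 * c + T) with (c + T) in Hs by ring.
  rewrite <- Hs by auto.
  rewrite (RInt_ext (fun y => scal 1 (h (1 * y + T))) h) by
    (intros x _; replace (1 * x + T) with (x + T) by ring; rewrite Hp; apply (scal_one (V := R_NormedModule))).
  rewrite <- (opp_RInt_swap h 0 c) by auto.
  unfold plus, opp; simpl. ring.
Qed.

Lemma RInt_periodic_antisym (h : R -> R) T c a :
  (forall x, continuous h x) -> (forall x, h (x + T) = h x) ->
  (forall x, h (c - x) = - h x) -> RInt h a (a + T) = 0.
Proof.
  intros Hc Hp Ha.
  assert (Ex : forall a b, ex_RInt h a b) by (intros; apply ex_RInt_continuous_R; auto).
  assert (Hs := RInt_comp_lin h (-1) c a (a + T) (Ex _ _)).
  rewrite (RInt_ext (fun y => scal (-1) (h (-1 * y + c))) h) in Hs by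
    (intros x _; replace (-1 * x + c) with (c - x) by ring; rewrite Ha;
     unfold scal; simpl; unfold mult; simpl; ring).
  replace (-1 * a + c) with ((-1 * (a + T) + c) + T) in Hs by ring.
  rewrite <- (opp_RInt_swap h (-1 * (a + T) + c)) in Hs by auto.
  rewrite !RInt_periodic_shift in Hs by auto.
  rewrite RInt_periodic_shift by auto. unfold opp in Hs; simpl in Hs. lra.
Qed.

Lemma periodic_INR (f : R -> R) T :
  (forall x, f (x + T) = f x) -> forall N x, f (x + INR N * T) = f x.
Proof.
  intros Hf N. induction N as [|N IH]; intros x.
  - simpl. f_equal. ring.
  - rewrite S_INR. replace (x + (INR N + 1) * T) with ((x + INR N * T) + T) by ring.
    rewrite Hf. apply IH.
Qed.

Lemma Derive_periodic (f : R -> R) T x :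
  (forall x, ex_derive f x) -> (forall x, f (x + T) = f x) ->
  Derive f (x + T) = Derive f x.
Proof.
  intros Hd Hp.
  symmetry. apply is_derive_unique.
  apply (is_derive_ext (fun y => f (y + T))); [intros; apply Hp|].
  auto_derive; [apply Hd | change (fun y => f y) with f; ring].
Qed.

Lemma Derive_opp_even (f : R -> R) x :
  (forall x, ex_derive f x) -> (forall x, f (- x) = f x) ->
  Derive f (- x) = - Derive f x.
Proof.
  intros Hd He.
  assert (H : is_derive (fun y => f (- y)) x (- Derive f (- x))).
  { auto_derive; [apply Hd | change (fun y => f y) with f; ring]. }
  apply (is_derive_ext _ f) in H; [|intros; apply He].
  rewrite (is_derive_unique _ _ _ H). ring.
Qed.

Lemma is_derive_RInt_shift_mult (f q : R -> R) a b t :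
  (forall x, ex_derive f x /\ continuous (Derive f) x) ->
  (forall x, continuous q x) ->
  is_derive (fun u => RInt (fun x => f (x + u) * q x) a b) t
    (RInt (fun x => Derive f (x + t) * q x) a b).
Proof.
  intros Hf Hq.
  assert (Hd : forall x u, is_derive (fun u => f (x + u) * q x) u (Derive f (x + u) * q x)).
  { intros x u. auto_derive; [apply Hf | change (fun y => f y) with f; ring]. }
  replace (RInt (fun x => Derive f (x + t) * q x) a b)
    with (RInt (fun x => Derive (fun u => f (x + u) * q x) t) a b)
    by (apply RInt_ext; intros; apply is_derive_unique, Hd).
  apply (is_derive_RInt_param (fun u x => f (x + u) * q x)).
  - apply filter_forall. intros y x _. eexists. apply Hd.
  - intros x _.
    apply (continuity_2d_pt_ext (fun u v => Derive f (v + u) * q v)).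
    { intros u v. symmetry. apply is_derive_unique, Hd. }
    apply continuity_2d_pt_mult.
    + apply (continuity_1d_2d_pt_comp (Derive f) (fun u v => v + u)).
      * apply continuity_pt_filterlim, Hf.
      * apply continuity_2d_pt_plus; [apply continuity_2d_pt_id2 | apply continuity_2d_pt_id1].
    + apply (continuity_1d_2d_pt_comp q (fun u v => v)).
      * apply continuity_pt_filterlim, Hq.
      * apply continuity_2d_pt_id2.
  - apply filter_forall. intros u. apply ex_RInt_continuous_R. intros x.
    apply (continuous_mult (fun x => f (x + u)) q); [|apply Hq].
    apply (continuous_comp (fun y => y + u) f).
    + apply (continuous_plus (fun y => y) (fun _ => u)); [apply continuous_id | apply continuous_const].
    + apply (@ex_derive_continuous R_AbsRing R_NormedModule), Hf.
Qed.

Section Cofactor.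

Variables (g : R -> R) (n m : nat) (mu : nat -> R).
Hypothesis g_C1 : forall x, ex_derive g x /\ continuous (Derive g) x.
Hypothesis g_even : forall x, g (- x) = g x.
Hypothesis g_per : forall x, g (x + PI) = g x.
Hypothesis mu_period : forall j, mu (j + n)%nat = mu j + INR m * PI.
Hypothesis mu_arith :
  forall p q p' q', (p + q = p' + q')%nat -> mu p + mu q = mu p' + mu q'.

(* The indices i + 1, ..., i + n - 1 are not reduced mod n: by [mu_period] they
   stand for the factors other than the i-th. *)
Definition cofactor i x := prodR (n - 1) (fun k => g (x + mu (i + 1 + k)%nat)).

Lemma prodR_upd_cofactor i t x :
  (i < n)%nat -> prodR n (fun j => g (x + upd mu i t j)) = g (x + t) * cofactor i x.
Proof.
  intros Hi. unfold cofactor.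
  rewrite <- (prodR_upd_periodic n i (g (x + t)) (fun j => g (x + mu j))) by
    (auto; intros j; cbv beta; rewrite mu_period, <- Rplus_assoc; apply periodic_INR; auto).
  apply prodR_ext. intros j _. unfold upd. destruct (Nat.eqb j i); reflexivity.
Qed.

Lemma cofactor_periodic i x : cofactor i (x + PI) = cofactor i x.
Proof.
  apply prodR_ext. intros j _.
  replace (x + PI + mu (i + 1 + j)%nat) with (x + mu (i + 1 + j)%nat + PI) by ring.
  apply g_per.
Qed.

Lemma cofactor_reflect i x : (i < n)%nat -> cofactor i (- x - 2 * mu i) = cofactor i x.
Proof.
  intros Hi. unfold cofactor. rewrite <- prodR_rev.
  apply prodR_ext. intros j Hj.
  assert (Hpair : mu (i + 1 + (n - 1 - 1 - j))%nat + mu (i + 1 + j)%nat = mu i + mu (i + n)%nat)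
    by (apply mu_arith; lia).
  rewrite mu_period in Hpair.
  replace (- x - 2 * mu i + mu (i + 1 + (n - 1 - 1 - j))%nat)
    with (- (x + mu (i + 1 + j)%nat) + INR m * PI) by lra.
  rewrite periodic_INR; auto.
Qed.

Lemma continuous_cofactor i x : continuous (cofactor i) x.
Proof.
  apply (continuous_prodR (n - 1) (fun k y => g (y + mu (i + 1 + k)%nat))).
  intros k. apply (continuous_comp (fun y => y + mu (i + 1 + k)%nat) g).
  - apply (continuous_plus (fun y => y) (fun _ => mu (i + 1 + k)%nat));
      [apply continuous_id | apply continuous_const].
  - apply (@ex_derive_continuous R_AbsRing R_NormedModule), g_C1.
Qed.

Lemma RInt_Derive_mul_cofactor i a :
  (i < n)%nat -> RInt (fun x => Derive g (x + mu i) * cofactor i x) a (a + PI) = 0.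
Proof.
  intros Hi.
  assert (g_ex : forall x, ex_derive g x) by apply g_C1.
  apply (RInt_periodic_antisym _ PI (- 2 * mu i)).
  - intros x. apply (continuous_mult (fun x => Derive g (x + mu i)) (cofactor i));
      [|apply continuous_cofactor].
    apply (continuous_comp (fun y => y + mu i) (Derive g)); [|apply g_C1].
    apply (continuous_plus (fun y => y) (fun _ => mu i)); [apply continuous_id | apply continuous_const].
  - intros x. replace (x + PI + mu i) with (x + mu i + PI) by ring.
    rewrite Derive_periodic, cofactor_periodic; auto.
  - intros x. replace (- 2 * mu i - x + mu i) with (- (x + mu i)) by ring.
    replace (- 2 * mu i - x) with (- x - 2 * mu i) by ring.
    rewrite Derive_opp_even, cofactor_reflect by auto. ring.
Qed.

End Cofactor.

Definition strategy (mu0 : R) (m n : nat) (j : nat) : R := mu0 + INR j * INR m * PI / INR n.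

Lemma strategy_period mu0 m n j :
  (n <> 0)%nat -> strategy mu0 m n (j + n) = strategy mu0 m n j + INR m * PI.
Proof.
  intros Hn. unfold strategy. rewrite plus_INR. field. apply not_0_INR, Hn.
Qed.

Lemma strategy_arith mu0 m n p q p' q' :
  (p + q = p' + q')%nat ->
  strategy mu0 m n p + strategy mu0 m n q = strategy mu0 m n p' + strategy mu0 m n q'.
Proof.
  intros E. apply (f_equal INR) in E. rewrite !plus_INR in E.
  unfold strategy, Rdiv. rewrite <- !Rplus_assoc.
  replace (mu0 + INR p * INR m * PI * / INR n + mu0 + INR q * INR m * PI * / INR n)
    with (2 * mu0 + (INR p + INR q) * (INR m * PI * / INR n)) by ring.
  rewrite E. ring.
Qed.

Theorem lemma3p2 (g : R -> R)
  (g_C1 : forall x, ex_derive g x /\ continuous (Derive g) x)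
  (g_even : forall x, g (- x) = g x)
  (g_per : forall x, g (x + PI) = g x)
  (n : nat) (hn : (1 <= n)%nat)
  (m : nat) (hm : (1 <= m)%nat)
  (mu0 : R) :
  let mustar := fun i : nat => mu0 + INR i * INR m * PI / INR n in
  forall i : nat, (i < n)%nat ->
    is_derive (fun t => Gfun g n (upd mustar i t)) (mustar i) 0.
Proof.
  intros mustar i Hi.
  assert (mu_period : forall j, mustar (j + n)%nat = mustar j + INR m * PI)
    by (intros; apply strategy_period; lia).
  set (Q := cofactor g n mustar i).
  apply (is_derive_ext (fun t => / PI * RInt (fun x => g (x + t) * Q x) (- (PI / 2)) (PI / 2))).
  { intros t. unfold Gfun. f_equal. apply RInt_ext. intros x _.
    symmetry. apply (prodR_upd_cofactor g n m); auto. }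
  assert (I0 := RInt_Derive_mul_cofactor g n m mustar g_C1 g_even g_per mu_period
                  (strategy_arith mu0 m n) i (- (PI / 2)) Hi).
  replace (- (PI / 2) + PI) with (PI / 2) in I0 by field.
  replace 0 with (/ PI * RInt (fun x => Derive g (x + mustar i) * Q x) (- (PI / 2)) (PI / 2))
    by (unfold Q; rewrite I0; ring).
  apply is_derive_scal, is_derive_RInt_shift_mult; [exact g_C1 | apply continuous_cofactor, g_C1].
Qed.
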